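(* Let $M$ be any matroid and let $N$ be a matroid whose simplification is the free matroid $U_{n,n}$. Then a tensor product of $M$ and $N$ exists and is unique.
   Context: Quasi product of matroids $M,N$: a matroid $P$ on $E(M)\times E(N)$ such that for every non-loop $e\in E(M)$, $x\mapsto(e,x)$ is an isomorphism $N\cong P|_{\{e\}\times E(N)}$; for every non-loop $f\in E(N)$, $x\mapsto(x,f)$ is an isomorphism $M\cong P|_{E(M)\times\{f\}}$; and the rows $\{e\}\times E(N)$ with $e$ a loop of $M$ and columns $E(M)\times\{f\}$ with $f$ a loop of $N$ have rank $0$. A tensor product is a quasi product of rank $\mathrm{rk}(M)\mathrm{rk}(N)$. $U_{n,n}$ is the free matroid of rank $n$ on $n$ elements. *)

From mathcomp Require Import all_boot.
Set Implicit Arguments. Unset Strict Implicit. Unset Printing Implicit Defensive.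

(* A matroid whose ground set is the whole finite type T. *)
Record matroid (T : finType) := Matroid {
  indep : {set T} -> bool;
  indep0 : indep set0;
  indep_sub : forall A B : {set T}, A \subset B -> indep B -> indep A;
  indep_aug : forall A B : {set T}, indep A -> indep B -> #|A| < #|B| ->
     exists2 x, x \in B :\: A & indep (x |: A)
}.

Definition mrank (T : finType) (M : matroid T) (A : {set T}) : nat :=
  \max_(B : {set T} | (B \subset A) && indep M B) #|B|.

Definition loop (T : finType) (M : matroid T) (e : T) : bool := ~~ indep M [set e].

Definition iso_restr (T1 T2 : finType) (M : matroid T1) (N : matroid T2)
    (S : {set T2}) (f : T1 -> T2) : Prop :=
  [/\ injective f, f @: [set: T1] = S &
      forall A : {set T1}, indep M A = indep N (f @: A)].

Definition quasi_product (T1 T2 : finType) (M : matroid T1) (N : matroid T2)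
    (P : matroid (T1 * T2)%type) : Prop :=
  [/\ (forall e : T1, ~~ loop M e ->
         iso_restr N P [set (e, x) | x : T2] (fun x => (e, x))),
      (forall f : T2, ~~ loop N f ->
         iso_restr M P [set (x, f) | x : T1] (fun x => (x, f))),
      (forall e : T1, loop M e -> mrank P [set (e, x) | x : T2] = 0) &
      (forall f : T2, loop N f -> mrank P [set (x, f) | x : T1] = 0)].

Definition tensor_product (T1 T2 : finType) (M : matroid T1) (N : matroid T2)
    (P : matroid (T1 * T2)%type) : Prop :=
  quasi_product M N P /\ mrank P setT = mrank M setT * mrank N setT.

Lemma Unn_sub n (A B : {set 'I_n}) : A \subset B -> true -> true.
Proof. by []. Qed.
Lemma Unn_aug n (A B : {set 'I_n}) : true -> true -> #|A| < #|B| ->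
  exists2 x, x \in B :\: A & true.
Proof.
move=> _ _ lt; have : 0 < #|B :\: A|.
  rewrite cardsD subn_gt0; apply: (leq_ltn_trans _ lt).
  exact: subset_leq_card (subsetIr B A).
by case/card_gt0P => x hx; exists x.
Qed.
Definition Unn (n : nat) : matroid 'I_n :=
  @Matroid _ (fun _ => true) isT (@Unn_sub n) (@Unn_aug n).

Definition parallel (T : finType) (M : matroid T) (x y : T) : bool :=
  [&& ~~ loop M x, ~~ loop M y & (x == y) || ~~ indep M [set x; y]].

(* S is the ground set of a simplification of M: one representative from
   each parallel class of non-loops. *)
Definition simplification_set (T : finType) (M : matroid T) (S : {set T}) : Prop :=
  [/\ forall x, x \in S -> ~~ loop M x,
      forall x, ~~ loop M x -> exists2 y, y \in S & parallel M x y &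
      forall x y, x \in S -> y \in S -> parallel M x y -> x = y].

Definition simplification_free (T : finType) (M : matroid T) (n : nat) : Prop :=
  exists S : {set T}, simplification_set M S /\
    exists g : 'I_n -> T, iso_restr (Unn n) M S g.

From mathcomp Require Import all_boot.
Set Implicit Arguments. Unset Strict Implicit. Unset Printing Implicit Defensive.

(* Let N have simplification U_{n,n}, realised by representatives g i of its
   n parallel classes of non-loops, and let r be the rank of M.  Up to loops
   and parallel copies, N is the direct sum of n coloops, so the tensor
   product should be the direct sum of n copies of M, one for each class.

   Existence: Pmat declares A independent when A consists of pairs of
   non-loops and, within each block (the pairs whose second coordinate lies
   in class i), the first coordinates are distinct and independent in M.
   Rows and columns are then copies of N and M, and the rank is r * n.

   Uniqueness: in any quasi product Q, replacing the second coordinate by its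
   class representative is a parallel retraction, so inside a block Q agrees
   with Pmat and each block has rank at most r.  If Q has rank r * n, the
   block exchange lemma shows that Q is the direct sum of its blocks, hence
   Q = Pmat. *)

Section MatroidFacts.
Variables (T : finType) (M : matroid T).

Lemma indep_extend (I J : {set T}) : indep M I -> indep M J -> #|I| <= #|J| ->
  exists K : {set T}, [/\ K \subset J, indep M (I :|: K) & #|I :|: K| = #|J|].
Proof.
move=> iI iJ; move: {2}(#|J| - #|I|) (erefl (#|J| - #|I|)) => k.
elim: k I iI => [|k IH] I iI gap le.
  exists set0; rewrite setU0 sub0set; split=> //.
  by apply/eqP; rewrite eqn_leq le -subn_eq0 gap.
have lt : #|I| < #|J| by rewrite -subn_gt0 gap.
have [x /setDP [xJ xI] ix] := indep_aug iI iJ lt.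
have [||K [KJ iK cK]] := IH (x |: I) ix; rewrite ?cardsU1 ?xI //.
  by rewrite add1n subnS gap.
exists (x |: K); rewrite subUset sub1set xJ KJ setUA (setUC I) -setUA setUA.
by split.
Qed.

Lemma indep_extend_in (C I J : {set T}) : I \subset C -> J \subset C ->
  indep M I -> indep M J -> #|I| <= #|J| ->
  exists K : {set T}, [/\ I \subset K, K \subset C, indep M K & #|K| = #|J|].
Proof.
move=> IC JC iI iJ le; have [K [KJ iIK cIK]] := indep_extend iI iJ le.
by exists (I :|: K); rewrite subsetUl subUset IC (subset_trans KJ JC).
Qed.

Lemma mrank_ge (A B : {set T}) : A \subset B -> indep M A -> #|A| <= mrank M B.
Proof.
move=> AB iA; apply: (leq_bigmax_cond (F := fun C : {set T} => #|C|)).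
by rewrite AB iA.
Qed.

Lemma mrank_le (B : {set T}) k :
  (forall A : {set T}, A \subset B -> indep M A -> #|A| <= k) -> mrank M B <= k.
Proof. by move=> bound; apply/bigmax_leqP => A /andP [AB iA]; apply: bound. Qed.

Lemma mrank_witness (B : {set T}) :
  exists2 A : {set T}, A \subset B /\ indep M A & #|A| = mrank M B.
Proof.
have : 0 < #|[pred A : {set T} | (A \subset B) && indep M A]|.
  by apply/card_gt0P; exists set0; rewrite inE sub0set indep0.
case/(eq_bigmax_cond (fun A : {set T} => #|A|)) => A /[!inE] /andP [AB iA] maxA.
by exists A => //; rewrite /mrank -maxA.
Qed.

Lemma indep_exchange_part (X C B : {set T}) : indep M X ->
  B \subset C -> indep M B -> #|B| = #|X :&: C| ->
  (forall A : {set T}, A \subset C -> indep M A -> #|A| <= #|B|) ->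
  indep M ((X :\: C) :|: B) /\ #|(X :\: C) :|: B| = #|X|.
Proof.
move=> iX BC iB cB maxB.
have cX : #|X| = #|X :&: C| + #|X :\: C| by rewrite cardsID.
have [|K [KX iK cK]] := indep_extend iB iX; first by rewrite cB cX leq_addr.
have KCB : K :&: C \subset B.
  have BKC : B :|: (K :&: C) \subset C by rewrite subUset BC subsetIr.
  have iBKC : indep M (B :|: (K :&: C)).
    by apply: (indep_sub _ iK); apply: setUS; apply: subsetIl.
  have BKCE : B :|: (K :&: C) = B.
    by apply/eqP; rewrite eq_sym eqEcard subsetUl maxB.
  by rewrite -BKCE subsetUr.
have BKE : B :|: K = B :|: (K :\: C).
  apply/setP => x; rewrite !inE; case: (boolP (x \in B)) => //= xB.
  case: (boolP (x \in C)) => //= xC; apply: contraNF xB => xK.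
  by rewrite (subsetP KCB) // inE xK.
have KXE : K :\: C = X :\: C.
  apply/eqP; rewrite eqEcard setSD //=.
  rewrite -(leq_add2l #|B|) {1}cB -cX -cK BKE cardsU.
  exact: leq_subr.
by rewrite setUC -KXE -BKE cK.
Qed.

Lemma indep1 x : indep M [set x] = ~~ loop M x.
Proof. by rewrite /loop negbK. Qed.

Lemma nonloop_indep (A : {set T}) x : indep M A -> x \in A -> ~~ loop M x.
Proof. by move=> iA xA; rewrite -indep1; apply: (indep_sub _ iA); rewrite sub1set. Qed.

Lemma parallel_sym x y : parallel M x y = parallel M y x.
Proof. by rewrite /parallel andbCA eq_sym setUC. Qed.

Lemma parallel_dep x y : parallel M x y -> x != y -> ~~ indep M [set x; y].
Proof. by case/and3P=> _ _ /orP [->|]. Qed.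

(* Parallelism is transitive: if {x, z} were independent, augmenting {y} from
   it would make y independent of x or of z. *)
Lemma parallel_trans y x z : parallel M x y -> parallel M y z -> parallel M x z.
Proof.
case/and3P=> nx ny pxy /and3P [_ nz pyz]; rewrite /parallel nx nz /=.
case: (eqVneq x z) => //= xz; apply/negP => ixz.
case: (eqVneq x y) => xy; first by subst y; rewrite ixz (negbTE xz) in pyz.
case: (eqVneq y z) => yz; first by subst z; rewrite ixz (negbTE xy) in pxy.
rewrite (negbTE xy) /= in pxy; rewrite (negbTE yz) /= in pyz.
have lt : #|[set y]| < #|[set x; z]| by rewrite cards1 cards2 xz.
rewrite -indep1 in ny; have [w] := indep_aug ny ixz lt.
rewrite !inE => /andP [_ /orP [] /eqP ->]; first by rewrite (negbTE pxy).
by rewrite setUC (negbTE pyz).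
Qed.

Lemma indep_replace X x y : indep M X -> x \in X -> y \notin X -> parallel M x y ->
  indep M (y |: (X :\ x)).
Proof.
move=> iX xX yX pxy.
have iy : indep M [set y] by case/and3P: pxy => _; rewrite indep1.
have [|K [KX iyK cK]] := indep_extend iy iX; first by rewrite cards1 (cardsD1 x X) xX.
have yK : y \notin K by apply: contra yX; apply: (subsetP KX).
have xK : x \notin K.
  apply/negP => xK; have xy : x != y by apply: contraNneq yX => <-.
  move/negP: (parallel_dep pxy xy); apply; apply: (indep_sub _ iyK).
  by rewrite subUset !sub1set !inE eqxx xK orbT.
suff -> : X :\ x = K by [].
apply/eqP; rewrite eq_sym eqEcard; apply/andP; split.
  by apply/subsetP => z zK; rewrite !inE (subsetP KX) // andbT; apply: contraNneq xK => <-.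
by move: cK; rewrite cardsU1 yK (cardsD1 x X) xX !add1n => -[->].
Qed.

Section ParallelRetraction.
Variables (D : {set T}) (rho : T -> T).
Hypothesis rho_in : forall x, x \in D -> rho x \in D.
Hypothesis rho_idem : forall x, x \in D -> rho (rho x) = rho x.
Hypothesis rho_par : forall x, x \in D -> parallel M x (rho x).

(* Induction on the number of points of A moved by rho; each step replaces
   one moved point a by rho a, which is parallel to a and outside A. *)
Lemma indep_retract_inj k (A : {set T}) : A \subset D -> {in A &, injective rho} ->
  #|[set a in A | rho a != a]| = k -> indep M A = indep M (rho @: A).
Proof.
elim: k A => [|k IH] A AD inj.
  move/eqP; rewrite cards_eq0 => /eqP noMoved.
  suff -> : rho @: A = A by [].
  rewrite -[RHS]imset_id; apply: eq_in_imset => a aA; apply/eqP.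
  apply: contraT => ra; suff : a \in set0 by rewrite inE.
  by rewrite -noMoved inE aA.
move=> moved; have : 0 < #|[set a in A | rho a != a]| by rewrite moved.
case/card_gt0P => a /[!inE] /andP [aA ra].
set b := rho a; have rb : rho b = rho a by apply/rho_idem/(subsetP AD).
have bA : b \notin A by apply: contra ra => bA; apply/eqP/inj.
set A' := b |: (A :\ a).
have inA' x : x \in A' = (x == b) || (x != a) && (x \in A) by rewrite !inE.
have A'D : A' \subset D.
  apply/subsetP => x; rewrite inA' => /orP [/eqP ->|/andP [_ /(subsetP AD)]] //.
  exact/rho_in/(subsetP AD).
have rho_other x : x \in A -> x != a -> rho x != rho a.
  by move=> xA; apply: contra => /eqP rx; apply/eqP/inj.
have inj' : {in A' &, injective rho}.
  move=> x y; rewrite !inA'.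
  case/orP => [/eqP ->|/andP [xa xA]]; case/orP => [/eqP ->|/andP [ya yA]] //.
  - by rewrite rb => /esym/eqP; rewrite (negbTE (rho_other _ yA ya)).
  - by rewrite rb => /eqP; rewrite (negbTE (rho_other _ xA xa)).
  - exact: inj.
have moved' : #|[set c in A' | rho c != c]| = k.
  suff -> : [set c in A' | rho c != c] = [set c in A | rho c != c] :\ a.
    by move: moved; rewrite (cardsD1 a) inE aA ra add1n => -[].
  apply/setP => x; rewrite !inE; case: (eqVneq x b) => [->|xb] /=.
    by rewrite rb (negbTE bA) eqxx andbF.
  by rewrite andbA.
have imE : rho @: A' = rho @: A by rewrite imsetU1 rb -imsetU1 setD1K.
rewrite -imE -(IH A' A'D inj' moved'); apply/idP/idP => iA.
  by apply: indep_replace => //; apply/rho_par/(subsetP AD).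
have -> : A = a |: (A' :\ b) by rewrite setU1K ?setD1K // !inE (negbTE bA) andbF.
apply: indep_replace; rewrite // ?inA' ?eqxx //.
  by rewrite eq_sym (negbTE ra).
by rewrite parallel_sym; apply/rho_par/(subsetP AD).
Qed.

Lemma indep_retract (A : {set T}) : A \subset D ->
  indep M A <-> {in A &, injective rho} /\ indep M (rho @: A).
Proof.
move=> AD; split; last by case=> inj; rewrite -(indep_retract_inj AD inj erefl).
move=> iA; suff inj : {in A &, injective rho}.
  by split => //; rewrite -(indep_retract_inj AD inj erefl).
move=> x y xA yA rxy; apply/eqP; apply: contraT => xy.
have pxy : parallel M x y.
  apply: (parallel_trans (y := rho x)); first exact/rho_par/(subsetP AD).
  by rewrite rxy parallel_sym; apply/rho_par/(subsetP AD).
have xyA : [set x; y] \subset A by rewrite subUset !sub1set xA yA.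
by have := parallel_dep pxy xy; rewrite (indep_sub xyA iA).
Qed.
End ParallelRetraction.

End MatroidFacts.

Section Blocks.
Variables (T I : finType) (blk : I -> {set T}).
Hypothesis blk_disj : forall x i j, x \in blk i -> x \in blk j -> i = j.

Lemma card_blocks (A : {set T}) : A \subset \bigcup_i blk i ->
  #|A| = \sum_i #|A :&: blk i|.
Proof.
move=> Acov.
have cardI i : #|A :&: blk i| = \sum_(x in A) (x \in blk i : nat).
  rewrite -sum1_card (eq_bigl (fun x => (x \in A) && (x \in blk i))) ?big_mkcondr //.
  by move=> x; rewrite inE.
rewrite (eq_bigr _ (fun i _ => cardI i)) exchange_big -sum1_card.
apply: eq_bigr => x xA; have /bigcupP [i _ xi] := subsetP Acov x xA.
rewrite (bigD1 i) //= xi big1 // => j ji.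
by apply/eqP; rewrite eqb0; apply: contra ji => xj; rewrite (blk_disj xj xi).
Qed.

Lemma blocks_eq (A B : {set T}) :
  A \subset \bigcup_i blk i -> B \subset \bigcup_i blk i ->
  (forall i, A :&: blk i = B :&: blk i) -> A = B.
Proof.
have sub (C D : {set T}) : C \subset \bigcup_i blk i ->
    (forall i, C :&: blk i = D :&: blk i) -> C \subset D.
  move=> Ccov CD; apply/subsetP => x xC; have /bigcupP [i _ xi] := subsetP Ccov x xC.
  by have /setP/(_ x) := CD i; rewrite !inE xC xi !andbT => /esym ->.
move=> Acov Bcov AB; apply/eqP; rewrite eqEsubset.
by rewrite (sub A B) ?(sub B A) // => i; rewrite AB.
Qed.

Lemma swap_blockI (X B : {set T}) i j :
  ((X :\: blk i) :|: (B :&: blk i)) :&: blk j =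
  if j == i then B :&: blk j else X :&: blk j.
Proof.
apply/setP => x; case: (eqVneq j i) => [->|ji]; rewrite !inE.
  by case: (x \in blk i); rewrite ?andbF ?andbT ?orbF.
case: (boolP (x \in blk j)) => xj; rewrite ?andbF ?andbT //.
have xi : x \notin blk i by apply: contra ji => xi; rewrite (blk_disj xj xi).
by rewrite (negbTE xi) andbF orbF.
Qed.

Section BlockSum.
Variables (Q : matroid T) (r : nat).
Hypothesis indep_cover : forall A : {set T}, indep Q A -> A \subset \bigcup_i blk i.
Hypothesis block_rank : forall i (A : {set T}), A \subset blk i -> indep Q A -> #|A| <= r.

Lemma full_block_sizes (X : {set T}) : indep Q X -> #|X| = r * #|I| ->
  forall i, #|X :&: blk i| = r.
Proof.
have blockI Y i : indep Q Y -> #|Y :&: blk i| <= r.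
  by move=> iY; apply: (block_rank (subsetIr _ _)); apply: (indep_sub (subsetIl _ _)).
move=> iX cX i; apply/eqP; rewrite eqn_leq blockI //=.
move: cX; rewrite (card_blocks (indep_cover iX)) mulnC -sum_nat_const.
rewrite (bigD1 i) //= [in X in _ = X -> _](bigD1 i) //= => cX.
rewrite -(leq_add2r (\sum_(j | j != i) #|X :&: blk j|)) cX leq_add2l.
by apply: leq_sum => j _; apply: blockI.
Qed.

(* Starting from a basis X of size r * #|I|, replace its blocks one at a time
   by those of B, each replacement being a block exchange. *)
Lemma indep_block_bases (B : {set T}) : mrank Q setT = r * #|I| ->
  B \subset \bigcup_i blk i ->
  (forall i, indep Q (B :&: blk i) /\ #|B :&: blk i| = r) -> indep Q B.
Proof.
move=> rankQ Bcov Bblk; have [Z [_ iZ] cZ] := mrank_witness Q setT.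
rewrite rankQ in cZ.
suff swaps : forall k (X : {set T}), indep Q X -> #|X| = r * #|I| ->
    #|[set i | X :&: blk i != B :&: blk i]| = k -> indep Q B.
  exact: swaps _ Z iZ cZ erefl.
elim=> [|k IH] X iX cX.
  move/eqP; rewrite cards_eq0 => /eqP same.
  suff <- : X = B by [].
  apply: blocks_eq => // [|i]; first exact: indep_cover.
  apply/eqP; apply: contraT => ne; suff : i \in set0 by rewrite inE.
  by rewrite -same inE.
move=> diff; have : 0 < #|[set i | X :&: blk i != B :&: blk i]| by rewrite diff.
case/card_gt0P => i /[!inE] ni; have [iBi cBi] := Bblk i.
have cBX : #|B :&: blk i| = #|X :&: blk i| by rewrite cBi full_block_sizes.
have maxB (A : {set T}) : A \subset blk i -> indep Q A -> #|A| <= #|B :&: blk i|.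
  by rewrite cBi; apply: block_rank.
have [iX' cX'] := indep_exchange_part iX (subsetIr B (blk i)) iBi cBX maxB.
apply: (IH _ iX'); first by rewrite cX' cX.
suff -> : [set j | ((X :\: blk i) :|: (B :&: blk i)) :&: blk j != B :&: blk j] =
          [set j | X :&: blk j != B :&: blk j] :\ i.
  by move: diff; rewrite (cardsD1 i) inE ni add1n => -[].
apply/setP => j; rewrite !inE swap_blockI.
by case: (eqVneq j i) => //= ->; rewrite eqxx.
Qed.
End BlockSum.
End Blocks.

(* Every non-loop f is parallel to exactly one g i (its class
   pclass f); rep f := g i is a parallel retraction of the non-loops, so the
   independent sets of N are the sets of non-loops meeting each class once. *)
Section Simplification.
Variables (T : finType) (N : matroid T) (n : nat) (S : {set T}) (g : 'I_n -> T).
Hypotheses (simpS : simplification_set N S) (isoS : iso_restr (Unn n) N S g).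

Lemma g_indep (B : {set 'I_n}) : indep N (g @: B).
Proof. by case: isoS => _ _ <-. Qed.

Lemma g_inj : injective g. Proof. by case: isoS. Qed.

Lemma g_nonloop i : ~~ loop N (g i).
Proof. by rewrite -indep1 -imset_set1 g_indep. Qed.

Definition pclass (f : T) : option 'I_n := [pick i | parallel N f (g i)].

Lemma pclass_par f i : pclass f = Some i -> parallel N f (g i).
Proof. by rewrite /pclass; case: pickP => // j pj [<-]. Qed.

(* Distinct elements of S are never parallel, so the class is unique. *)
Lemma pclass_spec f i : parallel N f (g i) -> pclass f = Some i.
Proof.
move=> pfi; rewrite /pclass; case: pickP => [j pfj|none]; last by rewrite none in pfi.
have gS k : g k \in S by case: isoS => _ <- _; apply: imset_f.
case: simpS => _ _ uniqS; congr Some; apply/g_inj/uniqS; rewrite ?gS //.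
by apply: (parallel_trans (y := f)); rewrite // parallel_sym.
Qed.

Lemma pclass_g i : pclass (g i) = Some i.
Proof. by apply: pclass_spec; rewrite /parallel g_nonloop eqxx. Qed.

Lemma pclass_loop f : loop N f -> pclass f = None.
Proof. by move=> lf; rewrite /pclass; case: pickP => // j /and3P [/negP]. Qed.

Lemma pclass_nonloop f : ~~ loop N f -> exists i, pclass f = Some i.
Proof.
case: simpS => _ reprS _ nf; have [y yS pfy] := reprS f nf.
case: isoS => _ gS _; move: yS; rewrite -gS => /imsetP [i _ yi]; subst y.
by exists i; apply: pclass_spec.
Qed.

Definition rep (f : T) : T := if pclass f is Some i then g i else f.
Definition nonloops : {set T} := [set f | ~~ loop N f].

Lemma rep_retraction :
  [/\ forall f, f \in nonloops -> rep f \in nonloops,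
      forall f, f \in nonloops -> rep (rep f) = rep f &
      forall f, f \in nonloops -> parallel N f (rep f)].
Proof.
split=> f; rewrite inE => /pclass_nonloop [i ci]; rewrite /rep ci.
- by rewrite inE g_nonloop.
- by rewrite pclass_g.
- exact: pclass_par.
Qed.

Lemma rep_in_g f : ~~ loop N f -> rep f \in g @: setT.
Proof. by case/pclass_nonloop => i ci; rewrite /rep ci imset_f. Qed.

Lemma indep_simpl (A : {set T}) :
  indep N A <-> A \subset nonloops /\ {in A &, injective rep}.
Proof.
case: rep_retraction => rep_in rep_idem rep_par; split.
  move=> iA; have Anl : A \subset nonloops.
    by apply/subsetP => f fA; rewrite inE (nonloop_indep iA fA).
  by split => //; case/(indep_retract rep_in rep_idem rep_par Anl): iA.
case=> Anl inj; apply/(indep_retract rep_in rep_idem rep_par Anl); split => //.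
apply: (indep_sub _ (g_indep setT)); apply/subsetP => _ /imsetP [f fA ->].
by apply: rep_in_g; move: (subsetP Anl f fA); rewrite inE.
Qed.

(* N has rank n: its independent sets inject into the n representatives. *)
Lemma mrank_simpl : mrank N setT = n.
Proof.
apply/eqP; rewrite eqn_leq; apply/andP; split.
  apply: mrank_le => A _ /indep_simpl [Anl inj].
  rewrite -(card_in_imset inj) -(card_ord n) -cardsT -(card_imset _ g_inj).
  apply/subset_leq_card/subsetP => _ /imsetP [f fA ->].
  by apply: rep_in_g; move: (subsetP Anl f fA); rewrite inE.
rewrite -{1}(card_ord n) -cardsT -(card_imset _ g_inj).
exact/mrank_ge/g_indep/subsetT.
Qed.
End Simplification.

Section Tensor.
Variables (T1 T2 : finType) (M : matroid T1) (N : matroid T2) (n : nat)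
  (S : {set T2}) (g : 'I_n -> T2).
Hypotheses (simpS : simplification_set N S) (isoS : iso_restr (Unn n) N S g).

Local Notation pclass := (pclass N g).
Local Notation r := (mrank M setT).

Definition support : {set T1 * T2} := [set p | ~~ loop M p.1 & ~~ loop N p.2].
Definition blk (i : 'I_n) : {set T1 * T2} :=
  [set p | ~~ loop M p.1 & pclass p.2 == Some i].

Lemma blk_disj p i j : p \in blk i -> p \in blk j -> i = j.
Proof. by rewrite !inE => /andP [_ /eqP ->] /andP [_ /eqP [->]]. Qed.

Lemma support_cover : support = \bigcup_i blk i.
Proof.
apply/eqP; rewrite eqEsubset; apply/andP; split.
  apply/subsetP => -[e f] /[!inE] /andP [ne /(pclass_nonloop simpS isoS) [i ci]].
  by apply/bigcupP; exists i; rewrite // inE ne ci eqxx.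
apply/bigcupsP => i _; apply/subsetP => -[e f] /[!inE] /andP [-> /eqP ci] /=.
by apply/negP => /(pclass_loop g); rewrite ci.
Qed.

Definition block_indep (B : {set T1 * T2}) : bool :=
  (#|fst @: B| == #|B|) && indep M (fst @: B).

Lemma block_indepS (A B : {set T1 * T2}) : A \subset B -> block_indep B -> block_indep A.
Proof.
move=> AB /andP [/imset_injP inj iB]; apply/andP; split.
  by apply/imset_injP => x y xA yA; apply: inj; apply: (subsetP AB).
exact: (indep_sub (imsetS _ AB) iB).
Qed.

(* The tensor product: the direct sum of n copies of M, one for each parallel
   class of non-loops of N, with parallel elements of N copied along. *)
Definition Pind (A : {set T1 * T2}) : bool :=
  (A \subset support) && [forall i, block_indep (A :&: blk i)].

Lemma Pind0 : Pind set0.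
Proof.
rewrite /Pind sub0set; apply/forallP => i.
by rewrite set0I /block_indep imset0 !cards0 indep0.
Qed.

Lemma Pind_sub (A B : {set T1 * T2}) : A \subset B -> Pind B -> Pind A.
Proof.
move=> AB /andP [Bsup /forallP Bblk]; rewrite /Pind (subset_trans AB Bsup).
by apply/forallP => i; apply: block_indepS (Bblk i); apply: setSI.
Qed.

(* Augmentation happens inside a block where B has more elements than A. *)
Lemma Pind_aug (A B : {set T1 * T2}) : Pind A -> Pind B -> #|A| < #|B| ->
  exists2 x, x \in B :\: A & Pind (x |: A).
Proof.
move=> /andP [Asup /forallP Ablk] /andP [Bsup /forallP Bblk] lt.
have [i lti] : exists i, #|A :&: blk i| < #|B :&: blk i|.
  apply/existsP; move: lt; apply: contraTT => /existsPn small.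
  rewrite -leqNgt support_cover in Asup Bsup *.
  rewrite (card_blocks blk_disj Asup) (card_blocks blk_disj Bsup).
  by apply: leq_sum => i _; rewrite leqNgt small.
have /andP [/eqP cA iA] := Ablk i; have /andP [/eqP cB iB] := Bblk i.
have ltM : #|fst @: (A :&: blk i)| < #|fst @: (B :&: blk i)| by rewrite cA cB.
have [x /setDP [xB xA] ix] := indep_aug iA iB ltM.
case/imsetP: xB => b /setIP [bB bi] ->{x} in xA ix *.
have bA : b \notin A by apply: contra xA => bA; rewrite imset_f // inE bA.
exists b; first by rewrite inE bA.
rewrite /Pind subUset sub1set (subsetP Bsup) // Asup; apply/forallP => j.
have -> : (b |: A) :&: blk j = if b \in blk j then b |: (A :&: blk j) else A :&: blk j.
  apply/setP => x; case: ifP => bj; rewrite !(in_setI, in_setU1).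
    by case: (eqVneq x b) => [->|]; rewrite ?bj.
  by case: (eqVneq x b) => [->|] //=; rewrite bj andbF.
case: ifP => bj; last exact: Ablk.
rewrite -(blk_disj bi bj) /block_indep imsetU1 ix cardsU1 xA cardsU1 cA.
by rewrite in_setI (negbTE bA) /= eqxx.
Qed.

Definition Pmat : matroid (T1 * T2)%type := Matroid Pind0 Pind_sub Pind_aug.

(* Row e of Pmat (e a non-loop of M) is a copy of N: a set of non-loops of N
   is independent iff it meets every parallel class at most once, i.e. iff
   its row copy meets every block at most once. *)
Lemma Pmat_row e : ~~ loop M e ->
  iso_restr N Pmat [set (e, x) | x : T2] (fun x => (e, x)).
Proof.
move=> ne; split; first by move=> x y [].
  by apply/setP => p; apply/imsetP/imsetP => -[x _ ->]; exists x.
move=> A; rewrite /= /Pind; apply/idP/idP.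
  case/(indep_simpl simpS isoS) => Anl inj; apply/andP; split.
    apply/subsetP => _ /imsetP [f fA ->]; rewrite !inE ne /=.
    by move: (subsetP Anl f fA); rewrite inE.
  apply/forallP => i; apply/andP; split.
    apply/imset_injP => p p' /setIP [/imsetP [f fA ->] fi].
    move=> /setIP [/imsetP [f' fA' ->] fi'] _.
    move: fi fi'; rewrite !inE /= => /andP [_ /eqP ci] /andP [_ /eqP ci'].
    by congr pair; apply: inj => //; rewrite /rep ci ci'.
  have ie : indep M [set e] by rewrite indep1.
  apply: (indep_sub _ ie).
  by apply/subsetP => _ /imsetP [_ /setIP [/imsetP [f _ ->] _] ->]; rewrite inE.
case/andP => Asup /forallP Ablk; apply/(indep_simpl simpS isoS).
have nlA f : f \in A -> ~~ loop N f.
  by move=> fA; have := subsetP Asup (e, f) (imset_f _ fA); rewrite inE => /andP [].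
split; first by apply/subsetP => f fA; rewrite inE nlA.
move=> f f' fA fA'.
have [i ci] := pclass_nonloop simpS isoS (nlA f fA).
have [j cj] := pclass_nonloop simpS isoS (nlA f' fA').
rewrite /rep ci cj => /(g_inj isoS) ij; subst j.
have /andP [/imset_injP inj _] := Ablk i.
have := inj (e, f) (e, f'); rewrite !inE !imset_f //= ne ci cj eqxx.
by move=> /(_ isT isT erefl) [].
Qed.

(* Column f of Pmat (f a non-loop of N) lies in a single block, on which
   Pmat is a copy of M. *)
Lemma Pmat_col f : ~~ loop N f ->
  iso_restr M Pmat [set (x, f) | x : T1] (fun x => (x, f)).
Proof.
move=> nf; split; first by move=> x y [].
  by apply/setP => p; apply/imsetP/imsetP => -[x _ ->]; exists x.
have [i ci] := pclass_nonloop simpS isoS nf.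
have fstK (A : {set T1}) : fst @: ((fun x => (x, f)) @: A) = A.
  by rewrite -imset_comp imset_id.
move=> A; rewrite /= /Pind; apply/idP/idP.
  move=> iA; apply/andP; split.
    by apply/subsetP => _ /imsetP [e eA ->]; rewrite !inE nf (nonloop_indep iA eA).
  apply/forallP => j; apply/andP; split.
    by apply/imset_injP => _ _ /setIP [/imsetP [x _ ->] _] /setIP [/imsetP [y _ ->] _] /= ->.
  apply: (indep_sub _ iA); rewrite -{2}(fstK A); apply/imsetS/subsetIl.
case/andP => Asup /forallP /(_ i) /andP [_].
suff -> : (fun x => (x, f)) @: A :&: blk i = (fun x => (x, f)) @: A by rewrite fstK.
apply/setIidPl/subsetP => _ /imsetP [e eA ->].
by have := subsetP Asup (e, f) (imset_f _ eA); rewrite !inE ci eqxx => /andP [-> _].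
Qed.

(* A set without pairs of non-loops has rank 0; this covers the rows of loops
   of M and the columns of loops of N. *)
Lemma Pmat_loop_rank (R : {set T1 * T2}) :
  {in R, forall p, p \notin support} -> mrank Pmat R = 0.
Proof.
move=> Rsup; apply/eqP; rewrite -leqn0; apply: mrank_le => B BR /andP [Bsup _].
rewrite leqn0 cards_eq0; apply/eqP/setP => p; rewrite inE; apply/negP => pB.
by have := Rsup p (subsetP BR p pB); rewrite (subsetP Bsup p pB).
Qed.

(* Rank r * n: each block has rank at most r, and a basis of M copied into
   each class representative g i gives an independent set of size r * n. *)
Lemma Pmat_rank : mrank Pmat setT = r * n.
Proof.
apply/eqP; rewrite eqn_leq; apply/andP; split.
  apply: mrank_le => A _ /andP [Asup /forallP Ablk].
  rewrite support_cover in Asup; rewrite (card_blocks blk_disj Asup) mulnC.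
  apply: (@leq_trans (\sum_(i < n) r)); last by rewrite sum_nat_const card_ord.
  apply: leq_sum => i _.
  by have /andP [/eqP <- iA] := Ablk i; apply: mrank_ge.
have [Bm [_ iBm] cBm] := mrank_witness M setT.
set Z := setX Bm (g @: [set: 'I_n]).
have -> : r * n = #|Z| by rewrite cardsX (card_imset _ (g_inj isoS)) cardsT card_ord cBm.
apply: mrank_ge; first exact: subsetT.
rewrite /= /Pind; apply/andP; split.
  apply/subsetP => -[e f]; rewrite !inE /= => /andP [eB /imsetP [k _ ->]].
  by rewrite (nonloop_indep iBm eB) (g_nonloop isoS).
apply/forallP => i; apply/andP; split.
  apply/imset_injP => -[e f] [e' f']; rewrite !inE /=.
  move=> /andP [/andP [_ /imsetP [k _ ->]] /andP [_ /eqP ck]].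
  move=> /andP [/andP [_ /imsetP [k' _ ->]] /andP [_ /eqP ck']] ->.
  by move: ck ck'; rewrite !(pclass_g simpS isoS) => -[->] [->].
apply: (indep_sub _ iBm); apply/subsetP => _ /imsetP [[e f] + ->].
by rewrite !inE => /andP [/andP [eB _] _].
Qed.

Lemma Pmat_tensor : tensor_product M N Pmat.
Proof.
split; last by rewrite Pmat_rank (mrank_simpl simpS isoS).
split; [exact: Pmat_row | exact: Pmat_col | |] => x lx; apply: Pmat_loop_rank.
  by move=> _ /imsetP [y _ ->]; rewrite inE lx.
by move=> _ /imsetP [y _ ->]; rewrite inE lx andbF.
Qed.

Section Uniqueness.
Variable Q : matroid (T1 * T2)%type.
Hypothesis quasiQ : quasi_product M N Q.

Lemma Q_single p : indep Q [set p] = (p \in support).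
Proof.
case: p => e f; case: quasiQ => _ colQ rowloop colloop; rewrite inE /=.
case: (boolP (loop M e)) => [le|ne] /=.
  apply/negbTE/negP => ip; have : #|[set (e, f)]| <= 0.
    by rewrite -(rowloop e le) mrank_ge // sub1set; apply/imsetP; exists f.
  by rewrite cards1.
case: (boolP (loop N f)) => [lf|nf].
  apply/negbTE/negP => ip; have : #|[set (e, f)]| <= 0.
    by rewrite -(colloop f lf) mrank_ge // sub1set; apply/imsetP; exists e.
  by rewrite cards1.
have [_ _ colE] := colQ f nf.
by rewrite -(imset_set1 (fun x => (x, f))) -colE; move: ne; rewrite /loop negbK.
Qed.

Lemma Q_indep_support (A : {set T1 * T2}) : indep Q A -> A \subset support.
Proof.
move=> iA; apply/subsetP => p pA; rewrite -Q_single.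
by apply: (indep_sub _ iA); rewrite sub1set.
Qed.

(* Within a row, two pairs are Q-parallel when their second coordinates are
   N-parallel; hence replacing the second coordinate by its class
   representative is a parallel retraction of Q. *)
Definition rhoQ (p : T1 * T2) : T1 * T2 := (p.1, rep N g p.2).

Lemma rhoQ_retraction :
  [/\ forall p, p \in support -> rhoQ p \in support,
      forall p, p \in support -> rhoQ (rhoQ p) = rhoQ p &
      forall p, p \in support -> parallel Q p (rhoQ p)].
Proof.
have [rep_in rep_idem rep_par] := rep_retraction simpS isoS.
have nl2 p : p \in support -> p.2 \in nonloops N by rewrite !inE => /andP [].
have rhoQ_in p : p \in support -> rhoQ p \in support.
  by move=> pD; move: (pD) (rep_in _ (nl2 p pD)); rewrite !inE => /andP [-> _].
split=> // [[e f] pD|[e f] pD]; first by rewrite /rhoQ /= rep_idem ?(nl2 _ pD).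
rewrite /parallel -!indep1 !Q_single pD rhoQ_in // /rhoQ /=.
case: (eqVneq f (rep N g f)) => [<-|frep]; first by rewrite eqxx.
have ne : ~~ loop M e by move: pD; rewrite inE => /andP [].
case: quasiQ => /(_ e ne) [_ _ rowQ] _ _ _.
have -> : [set (e, f); (e, rep N g f)] = (fun x => (e, x)) @: [set f; rep N g f].
  by rewrite imsetU1 imset_set1.
by rewrite -rowQ (parallel_dep (rep_par f (nl2 _ pD)) frep) orbT.
Qed.

(* Inside a block the retraction collapses everything onto the column of
   g i, which is a copy of M. *)
Lemma Q_block i (A : {set T1 * T2}) : A \subset blk i -> indep Q A = block_indep A.
Proof.
move=> Ai; have Asup : A \subset support.
  by rewrite support_cover; apply: subset_trans Ai (bigcup_sup _ _).
have [rho_in rho_idem rho_par] := rhoQ_retraction.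
have rhoE p : p \in A -> rhoQ p = (p.1, g i).
  by move=> pA; move: (subsetP Ai p pA); rewrite inE /rhoQ /rep => /andP [_ /eqP ->].
have imE : rhoQ @: A = (fun x => (x, g i)) @: (fst @: A).
  by rewrite -imset_comp; apply: eq_in_imset => p pA; rewrite rhoE.
have injE : {in A &, injective rhoQ} <-> {in A &, injective fst}.
  split=> inj p q pA qA; first by move=> eq1; apply: inj; rewrite ?rhoE ?eq1.
  by rewrite !rhoE // => -[]; apply: inj.
have colE : indep Q (rhoQ @: A) = indep M (fst @: A).
  by case: quasiQ => _ /(_ (g i) (g_nonloop isoS i)) [_ _ colQ] _ _; rewrite imE colQ.
rewrite /block_indep -colE; apply/idP/idP.
  by case/(indep_retract rho_in rho_idem rho_par Asup) => /injE /imset_injP -> ->.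
case/andP => /imset_injP /injE inj iA.
by apply/(indep_retract rho_in rho_idem rho_par Asup).
Qed.

Lemma Q_block_rank i (A : {set T1 * T2}) : A \subset blk i -> indep Q A -> #|A| <= r.
Proof. by move=> Ai; rewrite (Q_block Ai) => /andP [/eqP <-]; apply: mrank_ge. Qed.

(* Every independent subset of a block extends to one of size r: a basis of M
   copied into the column of g i is independent of size r in the block. *)
Lemma Q_block_basis i (A : {set T1 * T2}) : A \subset blk i -> indep Q A ->
  exists B : {set T1 * T2}, [/\ A \subset B, B \subset blk i, indep Q B & #|B| = r].
Proof.
move=> Ai iA; have [Bm [_ iBm] cBm] := mrank_witness M setT.
pose B0 := (fun x => (x, g i)) @: Bm.
have B0i : B0 \subset blk i.
  apply/subsetP => _ /imsetP [e eB ->].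
  by rewrite inE /= (nonloop_indep iBm eB) (pclass_g simpS isoS) eqxx.
have iB0 : indep Q B0.
  by case: quasiQ => _ /(_ (g i) (g_nonloop isoS i)) [_ _ colQ] _ _; rewrite -colQ.
have cB0 : #|B0| = r by rewrite card_imset // => x y [].
have [|B [AB Bi iB cB]] := indep_extend_in Ai B0i iA iB0.
  by rewrite cB0 (Q_block_rank Ai iA).
by exists B; rewrite -cB0.
Qed.

(* With rank r * n, Q is the direct sum of its blocks, each a copy of M. *)
Lemma Q_indep_eq (A : {set T1 * T2}) : mrank Q setT = r * n -> indep Q A = Pind A.
Proof.
move=> rankQ; apply/idP/idP.
  move=> iA; rewrite /Pind Q_indep_support //; apply/forallP => i.
  by rewrite -(Q_block (subsetIr A (blk i))) (indep_sub (subsetIl _ _) iA).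
case/andP => Asup /forallP Ablk.
have basis i : exists B : {set T1 * T2},
    [/\ A :&: blk i \subset B, B \subset blk i, indep Q B & #|B| = r].
  by apply: (Q_block_basis (subsetIr A (blk i))); rewrite (Q_block (subsetIr A (blk i))).
have [Bs BsP] := fin_all_exists basis.
pose B := \bigcup_i Bs i.
have BI j : B :&: blk j = Bs j.
  apply/setP => x; rewrite in_setI.
  apply/idP/idP => [/andP [/bigcupP [i _ xi] xj]|xj].
    by have [_ /subsetP Bsi _ _] := BsP i; rewrite -(blk_disj (Bsi x xi) xj).
  have [_ /subsetP Bsj _ _] := BsP j; rewrite Bsj // andbT.
  by apply/bigcupP; exists j.
have Bcov : B \subset \bigcup_i blk i.
  apply/bigcupsP => i _; have [_ Bsi _ _] := BsP i.
  exact: subset_trans Bsi (bigcup_sup _ _).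
have iB : indep Q B.
  apply: (indep_block_bases blk_disj (r := r)) => //.
  - by move=> C; rewrite -support_cover; apply: Q_indep_support.
  - exact: Q_block_rank.
  - by rewrite card_ord.
  - by move=> j; rewrite BI; have [_ _ iBj cBj] := BsP j.
apply: (indep_sub _ iB); apply/subsetP => x xA.
move: (subsetP Asup x xA); rewrite support_cover => /bigcupP [j _ xj].
have [/subsetP ABs _ _ _] := BsP j.
by apply/bigcupP; exists j => //; apply: ABs; rewrite in_setI xA xj.
Qed.
End Uniqueness.
End Tensor.

Theorem corollary2p5 (T1 T2 : finType) (M : matroid T1) (N : matroid T2) (n : nat) :
  simplification_free N n ->
  exists P : matroid (T1 * T2)%type, tensor_product M N P /\
    (forall Q : matroid (T1 * T2)%type, tensor_product M N Q -> indep Q =1 indep P).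
Proof.
move=> [S [simpS [g isoS]]]; exists (Pmat M simpS isoS).
split; first exact: Pmat_tensor.
move=> Q [quasiQ rankQ] A; apply: (Q_indep_eq simpS isoS quasiQ).
by rewrite rankQ (mrank_simpl simpS isoS).
Qed.
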